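(* For any $f,g\in L^\infty(\rho_X)$, \[|\mathcal R(\operatorname{sign} f)-\mathcal R(\operatorname{sign} g)|\le\mathbb P_{X\sim\rho_X}\big(\|f-g\|_{L^\infty(\rho_X)}\ge|f(X)|\big).\]
   Context: $\mathcal X=[0,1]^d$, $\rho$ is a probability distribution on $\mathcal X\times\{-1,1\}$ with $X$-marginal $\rho_X$, $(X,Y)\sim\rho$. $\operatorname{sign}(t)=1$ for $t>0$, $-1$ for $t<0$, $0$ for $t=0$, and $\operatorname{sign} f=\operatorname{sign}\circ f$. For a measurable $c$ on $\mathcal X$, $\mathcal R(c)=\mathbb P(c(X)\ne Y)$. *)

From HB Require Import structures.
From mathcomp Require Import all_boot all_order all_algebra.
From mathcomp Require Import all_classical all_reals all_analysis.
Set Implicit Arguments. Unset Strict Implicit. Unset Printing Implicit Defensive.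
Import Order.TTheory GRing.Theory Num.Theory.
Import numFieldNormedType.Exports.
Local Open Scope classical_set_scope.
Local Open Scope ring_scope.

(* The ambient space R^d is modelled as d.-tuple R with the product
   (= Borel) sigma-algebra; X = [0,1]^d is the subset below. *)
Definition cube (R : realType) (d : nat) : set (d.-tuple R) :=
  [set x | forall i : 'I_d, 0 <= tnth x i <= 1].

Definition lab (R : realType) (b : bool) : R := if b then 1 else -1.

Definition sign (R : realType) (t : R) : R := Num.sg t.

Definition risk (R : realType) (d : nat)
  (rho : probability (d.-tuple R * bool)%type R) (c : d.-tuple R -> R) : \bar R :=
  rho [set z | c z.1 <> lab R z.2].

Definition Linfty (R : realType) (d : nat)
  (mu : {measure set (d.-tuple R) -> \bar R}) (f : d.-tuple R -> R) : Prop :=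
  measurable_fun [set: d.-tuple R] f /\ (Lnorm mu +oo%E (EFin \o f) < +oo)%E.
Arguments cube R d : clear implicits.
Arguments lab R b : clear implicits.
Arguments sign R t : clear implicits.

From HB Require Import structures.
From mathcomp Require Import all_boot all_order all_algebra.
From mathcomp Require Import all_classical all_reals all_analysis.
From mathcomp Require Import lra ess_sup_inf measurable_realfun.
Import Order.TTheory GRing.Theory Num.Theory.
Import numFieldNormedType.Exports.
Local Open Scope classical_set_scope.
Local Open Scope ring_scope.

(* Let M be the essential supremum of |f - g|.  Off a null set N we have
   |f x - g x| <= M, so wherever moreover M < |f x| the signs of f x and g x
   agree and the two classifiers err on exactly the same labels.  The events
   "sign f errs" and "sign g errs" therefore coincide outside
   ([|f| <= M] \cup N) x {-1,1}, so their probabilities differ by at most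
   rho_X(|f| <= M). *)

Lemma sgr_eq_of_dist_lt (R : realDomainType) (a b : R) :
  `|a - b| < `|a| -> Num.sg b = Num.sg a.
Proof.
have [a_lt0|a_gt0|->] := ltrgtP a 0; last by rewrite normr0 normr_lt0.
- rewrite (ltr0_norm a_lt0) ltr_norml (ltr0_sg a_lt0) => /andP[ab _].
  by rewrite ltr0_sg //; lra.
- rewrite (gtr0_norm a_gt0) ltr_norml (gtr0_sg a_gt0) => /andP[_ ab].
  by rewrite gtr0_sg //; lra.
Qed.

Lemma sgr_neq_lab (R : realType) (t : R) (b : bool) :
  Num.sg t <> lab R b <-> (if b then t <= 0 else 0 <= t).
Proof.
rewrite /lab; have [t_lt0|t_gt0|->] := ltrgtP t 0.
- by rewrite (ltr0_sg t_lt0); case: b => //=; split => // _; lra.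
- by rewrite (gtr0_sg t_gt0); case: b => //=; split => // _; lra.
- by rewrite sgr0; case: b => //=; split => // _; lra.
Qed.

Lemma measurable_sign_misclassified {d} {T : measurableType d} {R : realType}
    {f : T -> R} : measurable_fun [set: T] f ->
  measurable [set z : T * bool | sign R (f z.1) <> lab R z.2].
Proof.
move=> mf.
have -> : [set z : T * bool | sign R (f z.1) <> lab R z.2] =
    f @^-1` `]-oo, 0] `*` [set true] `|` f @^-1` `[0, +oo[ `*` [set false].
  rewrite preimage_itvNyc preimage_itvcy; apply/seteqP; split => -[x b] /=.
    by move/sgr_neq_lab; case: b; [left | right].
  by case=> -[fx ->]; apply/sgr_neq_lab.
have mpre (Y : set R) : measurable Y -> measurable (f @^-1` Y).
  by move=> mY; rewrite -[_ @^-1` _]setTI; exact: mf.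
by apply: measurableU; apply: measurableX => //; exact: mpre.
Qed.

Lemma ae_le_Lnorm_infty {d} {T : measurableType d} {R : realType}
    (mu : {measure set T -> \bar R}) (h : T -> R) :
  \forall x \ae mu, (`|h x|%:E <= Lnorm mu +oo (fun x => (h x)%:E))%E.
Proof.
(* For the null measure the norm is 0 by convention, but then every set is
   negligible. *)
rewrite unlock /=; case: ifPn => [_|]; first exact: ess_sup_ge.
rewrite -leNgt => muT_le0; exists setT; split => //.
by apply/eqP; rewrite eq_le muT_le0 measure_ge0.
Qed.

Section measure_setD_eq.
Context d (T : measurableType d) (R : realType).
Implicit Types A B C : set T.

Lemma measure_le_setD_eq (mu : {measure set T -> \bar R}) {A B C} :
  measurable A -> measurable B -> measurable C -> A `\` C = B `\` C ->
  (mu A <= mu B + mu C)%E.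
Proof.
move=> mA mB mC ABC; rewrite (measureDI mu mA mC) ABC.
by apply: leeD; apply: le_measure; rewrite ?inE //;
  apply: measurableD || apply: measurableI.
Qed.

Lemma measure_dist_le_setD_eq (mu : {finite_measure set T -> \bar R}) {A B C} :
  measurable A -> measurable B -> measurable C -> A `\` C = B `\` C ->
  (`|mu A - mu B| <= mu C)%E.
Proof.
move=> mA mB mC ABC.
have leAB : (mu A <= mu B + mu C)%E := measure_le_setD_eq mu mA mB mC ABC.
have leBA : (mu B <= mu A + mu C)%E := measure_le_setD_eq mu mB mA mC (esym ABC).
have finA : mu A \is a fin_num := fin_num_measure mu A mA.
have finB : mu B \is a fin_num := fin_num_measure mu B mB.
have finC : mu C \is a fin_num := fin_num_measure mu C mC.
move: (mu A) (mu B) (mu C) leAB leBA finA finB finC => [a| |] [b| |] [c| |] //=.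
rewrite -!EFinD !lee_fin ler_norml => *; apply/andP; split; lra.
Qed.

End measure_setD_eq.

Lemma risk_dist_le {R : realType} {d : nat}
    (rho : probability (d.-tuple R * bool)%type R) {c1 c2 : d.-tuple R -> R}
    {A : set (d.-tuple R)} : measurable A ->
  measurable [set z | c1 z.1 <> lab R z.2] ->
  measurable [set z | c2 z.1 <> lab R z.2] ->
  (forall x, ~ A x -> c1 x = c2 x) ->
  (`|risk rho c1 - risk rho c2| <= rho (A `*` setT))%E.
Proof.
move=> mA m1 m2 c12; apply: measure_dist_le_setD_eq => //.
  exact: measurableX.
have c12_off z : ~ (A `*` setT) z -> c1 z.1 = c2 z.1.
  by move=> nAz; apply: c12 => Az; apply: nAz.
by apply/seteqP; split => z /= [err nAz]; split => //;
  [rewrite -c12_off | rewrite c12_off].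
Qed.

Theorem lemma6 (R : realType) (d : nat)
  (rho : probability (d.-tuple R * bool)%type R)
  (rhoX : probability (d.-tuple R) R)
  (hsupp : rho (cube R d `*` setT) = 1%E)
  (hmarg : forall A : set (d.-tuple R), measurable A ->
     rhoX A = rho (A `*` setT))
  (f g : d.-tuple R -> R)
  (hf : Linfty rhoX f) (hg : Linfty rhoX g) :
  (`| risk rho (sign R \o f) - risk rho (sign R \o g) |
     <= rhoX [set x | Lnorm rhoX +oo%E (fun x => (f x - g x)%:E) >= `| f x |%:E])%E.
Proof.
have [[mf _] [mg _]] := (hf, hg).
set M := Lnorm _ _ _.
have [N [mN N0 le_M]] := ae_le_Lnorm_infty rhoX (fun x => f x - g x).
set B := [set x | (`|f x|%:E <= M)%E].
have mB : measurable B.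
  rewrite -[B]setTI; apply: measurable_lee => //.
  by apply/measurable_EFinP; apply: measurableT_comp => //; exact: normr_measurable.
have -> : rhoX B = rho ((B `|` N) `*` setT).
  by rewrite -hmarg ?measureU0 //; exact: measurableU.
apply: (risk_dist_le rho (c1 := sign R \o f) (c2 := sign R \o g)).
- exact: measurableU.
- exact: measurable_sign_misclassified.
- exact: measurable_sign_misclassified.
move=> x /not_orP[Bx Nx] /=; apply/esym/sgr_eq_of_dist_lt; rewrite -lte_fin.
apply: (@le_lt_trans _ _ M); last by rewrite ltNge; apply/negP.
by apply: contrapT => /le_M.
Qed.
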